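(* Under the standing assumptions, for fixed $\lambda>0$ and $\eta_1=\frac1d+\frac{\lambda}{n^{1-(k-1)\alpha}\ln d}$, $$\Phi(n\eta_1)=o\!\left(\exp\left\{-\left(\frac{\lambda^2}{2}+o(1)\right)\frac{n^{(2k-1)\alpha-1}}{(\ln d)^2}\right\}\right)\quad(n\to\infty),$$ where $n\eta_1$ is treated as an integer (equivalently, $\Phi$ is evaluated through its Gamma-function extension $\Phi_c$).
   Context: Parameters: integer $k\ge2$, constants $\alpha>0$, $r>0$, $0<p<1$; $d=n^{\alpha}$ (treated as an integer), $m=n\ln d$, $\tau=\frac1{1-p}$, $r_{cr}=\frac1{\ln\tau}$. Standing assumptions: $(2k-1)\alpha>1$, $k\alpha\le1$, $k\ge\frac{\tau\ln\tau}{\tau-1}$, and $r<r_{cr}$. Notation: $f(s)=1+\frac{p}{1-p}\cdot\frac{s^k-d^{-k}}{1-d^{-k}}$ for $s\in[0,1]$; $B(S)=\binom{n}{S}\left(\frac1d\right)^{S}\left(1-\frac1d\right)^{n-S}$; $W(S)=f(S/n)^{rm}$; $\Phi(S)=B(S)W(S)$; its real extension is $\Phi_c(z)=\frac{\Gamma(n+1)}{\Gamma(z+1)\Gamma(n-z+1)}\left(\frac1d\right)^{z}\left(1-\frac1d\right)^{n-z}f(z/n)^{rm}$ for $z\in[0,n]$. *)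

From Stdlib Require Import Reals.
From Coquelicot Require Import Coquelicot.
Open Scope R_scope.

Definition Gamma (x : R) : R :=
  RInt_gen (fun t => Rpower t (x - 1) * exp (- t)) (at_right 0) (Rbar_locally p_infty).

Definition dd (alpha : R) (n : nat) : R := Rpower (INR n) alpha.
Definition mm (alpha : R) (n : nat) : R := INR n * ln (dd alpha n).

Definition tau (p : R) : R := / (1 - p).
Definition r_cr (p : R) : R := / ln (tau p).

Definition f_fun (k : nat) (alpha p : R) (n : nat) (s : R) : R :=
  1 + p / (1 - p) * ((s ^ k - / (dd alpha n) ^ k) / (1 - / (dd alpha n) ^ k)).

Definition Phi_c (k : nat) (alpha r p : R) (n : nat) (z : R) : R :=
  Gamma (INR n + 1) / (Gamma (z + 1) * Gamma (INR n - z + 1))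
  * Rpower (/ dd alpha n) z * Rpower (1 - / dd alpha n) (INR n - z)
  * Rpower (f_fun k alpha p n (z / INR n)) (r * mm alpha n).

Definition eta1 (k : nat) (alpha lambda : R) (n : nat) : R :=
  / dd alpha n + lambda / (Rpower (INR n) (1 - (INR k - 1) * alpha) * ln (dd alpha n)).

Definition rate (k : nat) (alpha : R) (n : nat) : R :=
  Rpower (INR n) ((2 * INR k - 1) * alpha - 1) / (ln (dd alpha n)) ^ 2.

(* Write [z = n eta_1] and [delta_n = d eta_1 - 1 = lambda n^(k alpha - 1) / (alpha ln n)];
   since [k alpha <= 1], [0 < delta_n <= lambda / (alpha ln n) -> 0].
   1. Stirling-type bounds for [Gamma (a + 1)], read off the integral definition (the
      improper integral exists because its proper parts are bounded).
   2. A Chernoff bound for the Gamma-binomial law: for [N q <= z < N],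
      [C(N, z) q^z (1 - q)^(N - z) <= (N + 1) e^3 exp (- (z - N q)^2 / (2 z))],
      via a quadratic lower bound on the relative entropy.
   3. The weight [f(eta_1)^(r m) <= exp (r m (f(eta_1) - 1))] is bounded by a constant [Kc]:
      [f(eta_1) - 1 = O(eta_1^(k-1) (eta_1 - 1/d))] and [m (eta_1 - 1/d) = lambda d^(k-1)].
   4. Exact exponent identities turn step 2 into
      [Phi_c (z) <= exp (ln (n + 1) + 3 + Kc - (lambda^2/2) rate / (1 + delta_n))].
   Choosing [eps_n] so that this bound equals [exp (- (lambda^2/2 + eps_n) rate - ln n)], the
   ratio of the theorem is at most [1/n], while [eps_n = O(1 / ln n)] because the rate grows
   like a positive power of [n]. *)

From Stdlib Require Import Reals Lra Lia Classical.
From Coquelicot Require Import Coquelicot.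
Open Scope R_scope.

Lemma exp_le_mono x y : x <= y -> exp x <= exp y.
Proof. intros [Hlt | ->]; [left; apply exp_increasing | right]; auto. Qed.

Lemma ln_le_sub1 y : 0 < y -> ln y <= y - 1.
Proof. intros Hy. pose proof (exp_ineq1_le (ln y)) as H. rewrite exp_ln in H; lra. Qed.

Lemma ln_ge_1sub y : 0 < y -> 1 - / y <= ln y.
Proof.
  intros Hy. pose proof (ln_le_sub1 (/ y) (Rinv_0_lt_compat _ Hy)) as H.
  rewrite ln_Rinv in H; lra.
Qed.

(* A second-order refinement for [t >= 1]: with [u = 1 - 1/t], [ln t >= u + u^2/2].
   The difference vanishes at [t = 1] and has derivative [(1 - 1/s)^2 / s >= 0]. *)
Lemma ln_ge_2nd t : 1 <= t -> (1 - / t) + (1 - / t) ^ 2 / 2 <= ln t.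
Proof.
  intros Ht.
  set (h := fun s => ln s - ((1 - / s) + (1 - / s) ^ 2 / 2)).
  assert (Hder : forall s, 0 < s -> is_derive h s (/ s * (1 - / s) ^ 2)).
  { intros s Hs. unfold h. auto_derive; [lra | field; lra]. }
  destruct (Req_dec t 1) as [-> | Ht1].
  { rewrite ln_1, Rinv_1. lra. }
  destruct (MVT_gen h 1 t (fun s => / s * (1 - / s) ^ 2)) as [c [Hc Hmvt]].
  - intros x Hx. apply Hder. rewrite Rmin_left in Hx; lra.
  - intros x Hx.
    apply continuity_pt_filterlim, (@ex_derive_continuous R_AbsRing R_NormedModule h).
    eexists. apply Hder. rewrite Rmin_left in Hx; lra.
  - rewrite Rmin_left, Rmax_right in Hc by lra.
    assert (0 <= / c * (1 - / c) ^ 2 * (t - 1)).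
    { apply Rmult_le_pos; [apply Rmult_le_pos|lra].
      - left; apply Rinv_0_lt_compat; lra.
      - apply pow2_ge_0. }
    unfold h in Hmvt. rewrite ln_1, Rinv_1 in Hmvt. lra.
Qed.

Lemma exp_ge_pow4 y : 0 <= y -> (y / 4) ^ 4 <= exp y.
Proof.
  intros Hy. replace (exp y) with (exp (y / 4) ^ 4).
  - apply pow_incr. pose proof (exp_ineq1_le (y / 4)). lra.
  - simpl. rewrite Rmult_1_r, <- !exp_plus. f_equal. field.
Qed.

Lemma pow_sub_le (k : nat) (e q : R) : 0 <= q <= e ->
  e ^ S k - q ^ S k <= INR (S k) * e ^ k * (e - q).
Proof.
  intros Hq. induction k as [|k IH].
  - simpl. lra.
  - rewrite S_INR.
    assert (q ^ S k <= e ^ S k) by (apply pow_incr; lra).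
    assert (e * (e ^ S k - q ^ S k) <= e * (INR (S k) * e ^ k * (e - q)))
      by (apply Rmult_le_compat_l; lra).
    assert (q ^ S k * (e - q) <= e ^ S k * (e - q)) by (apply Rmult_le_compat_r; lra).
    replace (e ^ S (S k) - q ^ S (S k)) with (e * (e ^ S k - q ^ S k) + q ^ S k * (e - q))
      by (simpl; ring).
    simpl in *. nra.
Qed.

Section NonnegImproperIntegral.

Variable f : R -> R.
Hypothesis f_cont : forall t, 0 < t -> continuous f t.
Hypothesis f_nonneg : forall t, 0 < t -> 0 <= f t.

Lemma ex_RInt_pos a b : 0 < a -> a <= b -> ex_RInt f a b.
Proof.
  intros Ha Hab. apply (@ex_RInt_continuous R_CompleteNormedModule). intros z Hz.
  apply f_cont. rewrite Rmin_left in Hz; lra.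
Qed.

Lemma RInt_pos_mono a a' b' b : 0 < a -> a <= a' -> a' <= b' -> b' <= b ->
  RInt f a' b' <= RInt f a b.
Proof.
  intros Ha Haa Hab Hbb.
  rewrite <- (@RInt_Chasles R_CompleteNormedModule f a a' b) by (apply ex_RInt_pos; lra).
  rewrite <- (@RInt_Chasles R_CompleteNormedModule f a' b' b) by (apply ex_RInt_pos; lra).
  assert (0 <= RInt f a a')
    by (apply RInt_ge_0; [lra | apply ex_RInt_pos; lra | intros; apply f_nonneg; lra]).
  assert (0 <= RInt f b' b)
    by (apply RInt_ge_0; [lra | apply ex_RInt_pos; lra | intros; apply f_nonneg; lra]).
  change plus with Rplus. lra.
Qed.

Lemma is_RInt_gen_bounded (M : R) :
  (forall a b, 0 < a -> a <= b -> RInt f a b <= M) ->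
  exists S, is_RInt_gen f (at_right 0) (Rbar_locally p_infty) S /\ S <= M /\
    forall a b, 0 < a -> a <= b -> RInt f a b <= S.
Proof.
  intros HM.
  set (E := fun y => exists a b, 0 < a /\ a <= b /\ y = RInt f a b).
  destruct (completeness E) as [S [Hub Hlub]].
  { exists M. intros y (a & b & Ha & Hab & ->). auto. }
  { exists (RInt f 1 1), 1, 1. repeat split; lra. }
  assert (HS : forall a b, 0 < a -> a <= b -> RInt f a b <= S)
    by (intros a b Ha Hab; apply Hub; exists a, b; auto).
  exists S. split; [| split; [apply Hlub; intros y (a & b & Ha & Hab & ->); auto | exact HS]].
  intros P [eps HP].
  assert (Happrox : exists a0 b0, 0 < a0 /\ a0 <= b0 /\ S - eps < RInt f a0 b0).
  { apply NNPP. intros Hno.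
    assert (S <= S - eps).
    { apply Hlub. intros y (a & b & Ha & Hab & ->).
      apply Rnot_lt_le. intros Hlt. apply Hno. exists a, b. auto. }
    destruct eps; simpl in *; lra. }
  destruct Happrox as (a0 & b0 & Ha0 & Hab0 & Hclose).
  apply (Filter_prod _ _ _ (fun a => 0 < a /\ a < a0) (fun b => b0 < b)).
  - exists (mkposreal a0 Ha0). intros y Hy Hy0. change (Rabs (y - 0) < a0) in Hy.
    apply Rabs_def2 in Hy. split; [auto | lra].
  - exists b0. auto.
  - intros a b [Ha Haa] Hbb. exists (RInt f a b). split.
    + apply (@RInt_correct R_CompleteNormedModule), ex_RInt_pos; lra.
    + apply HP. change (Rabs (RInt f a b - S) < eps).
      assert (RInt f a0 b0 <= RInt f a b) by (apply RInt_pos_mono; lra).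
      assert (RInt f a b <= S) by (apply HS; lra).
      apply Rabs_def1; lra.
Qed.

End NonnegImproperIntegral.

Lemma RInt_exp_decay_le (C c x y : R) : 0 <= C -> 0 < c -> 0 <= x -> x <= y ->
  RInt (fun t => C * exp (- t / c)) x y <= C * c.
Proof.
  intros HC Hc Hx Hxy.
  rewrite (is_RInt_unique _ x y (C * c * exp (- x / c) - C * c * exp (- y / c))).
  - assert (exp (- x / c) <= 1).
    { rewrite <- exp_0. apply exp_le_mono.
      assert (0 <= x / c) by (apply Rdiv_le_0_compat; lra). unfold Rdiv in *. lra. }
    assert (0 < exp (- y / c)) by apply exp_pos.
    assert (0 <= C * c) by nra. nra.
  - replace (C * c * exp (- x / c) - C * c * exp (- y / c))
      with ((- C * c * exp (- y / c)) - (- C * c * exp (- x / c))) by ring.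
    apply (is_RInt_derive (fun t => - C * c * exp (- t / c))).
    + intros z _. auto_derive; [auto | unfold Rdiv; field; lra].
    + intros z _.
      apply (@ex_derive_continuous R_AbsRing R_NormedModule (fun t => C * exp (- t / c))).
      auto_derive. auto.
Qed.

(* Upper: [t^a e^(-t) <= (a+1)^a e^(-a) e^(-t/(a+1))] by [ln x <= x - 1] at
   [x = t/(a+1)]. Lower: the integrand is at least [a^a e^(-a-1)] on [[a, a+1]]. *)
Lemma Gamma_bounds a : 0 < a ->
  exp (a * ln a - a - 1) <= Gamma (a + 1) <= (a + 1) * exp (a * ln (a + 1) - a).
Proof.
  intros Ha. unfold Gamma. replace (a + 1 - 1) with a by ring.
  set (f := fun t => Rpower t a * exp (- t)).
  set (C := exp (a * ln (a + 1) - a)).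
  assert (Hf : forall t, 0 < t -> f t = exp (a * ln t - t)).
  { intros t Ht. unfold f, Rpower. rewrite <- exp_plus. f_equal; ring. }
  assert (Hcont : forall t, 0 < t -> continuous f t).
  { intros t Ht. apply (@ex_derive_continuous R_AbsRing R_NormedModule f).
    unfold f, Rpower. auto_derive. lra. }
  assert (Hnonneg : forall t, 0 < t -> 0 <= f t)
    by (intros t Ht; rewrite Hf by auto; left; apply exp_pos).
  assert (Hmajor : forall t, 0 < t -> f t <= C * exp (- t / (a + 1))).
  { intros t Ht. rewrite Hf by auto. unfold C. rewrite <- exp_plus. apply exp_le_mono.
    assert (Hl := ln_le_sub1 (t / (a + 1)) ltac:(apply Rdiv_lt_0_compat; lra)).
    rewrite ln_div in Hl by lra.
    assert (a * (ln t - ln (a + 1)) <= a * (t / (a + 1) - 1)) by (apply Rmult_le_compat_l; lra).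
    assert (a * (t / (a + 1)) - t = - t / (a + 1)) by (field; lra).
    lra. }
  destruct (is_RInt_gen_bounded f Hcont Hnonneg (C * (a + 1))) as (S & HS & HSM & HSsup).
  { intros x y Hx Hxy. apply Rle_trans with (RInt (fun t => C * exp (- t / (a + 1))) x y).
    - apply RInt_le; auto.
      + apply (ex_RInt_pos f Hcont); auto.
      + apply (@ex_RInt_continuous R_CompleteNormedModule). intros z _.
        apply (@ex_derive_continuous R_AbsRing R_NormedModule (fun t => C * exp (- t / (a + 1)))).
        auto_derive. auto.
      + intros z Hz. apply Hmajor. lra.
    - assert (0 < C) by apply exp_pos. apply RInt_exp_decay_le; lra. }
  rewrite (is_RInt_gen_unique f S HS). split; [| lra].
  apply Rle_trans with (RInt f a (a + 1)); [| apply HSsup; lra].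
  apply Rle_trans with (RInt (fun _ => exp (a * ln a - a - 1)) a (a + 1)).
  - rewrite RInt_const. simpl. unfold scal; simpl; unfold mult; simpl. lra.
  - apply RInt_le; [lra | apply ex_RInt_const | apply (ex_RInt_pos f Hcont); lra |].
    intros z Hz. rewrite Hf by lra. apply exp_le_mono.
    assert (ln a <= ln z) by (apply ln_le; lra).
    assert (a * ln a <= a * ln z) by (apply Rmult_le_compat_l; lra). lra.
Qed.

Definition gamma_binom (N z : R) : R := Gamma (N + 1) / (Gamma (z + 1) * Gamma (N - z + 1)).

(* [N ln (N + 1) <= N ln N + 1], from [ln (1 + 1/N) <= 1/N]. *)
Lemma mul_ln_succ_le N : 0 < N -> N * ln (N + 1) <= N * ln N + 1.
Proof.
  intros HN.
  assert (Hl := ln_le_sub1 ((N + 1) / N) ltac:(apply Rdiv_lt_0_compat; lra)).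
  rewrite ln_div in Hl by lra.
  assert (N * (ln (N + 1) - ln N) <= N * ((N + 1) / N - 1)) by (apply Rmult_le_compat_l; lra).
  assert (N * ((N + 1) / N - 1) = 1) by (field; lra).
  lra.
Qed.

Lemma gamma_binom_bound N z : 0 < z < N ->
  0 <= gamma_binom N z <=
  exp (ln (N + 1) + 3 + N * ln N - z * ln z - (N - z) * ln (N - z)).
Proof.
  intros Hz.
  destruct (Gamma_bounds N ltac:(lra)) as [GN1 GN2].
  destruct (Gamma_bounds z ltac:(lra)) as [Gz _].
  destruct (Gamma_bounds (N - z) ltac:(lra)) as [Gw _].
  pose proof (exp_pos (N * ln N - N - 1)).
  pose proof (exp_pos (z * ln z - z - 1)) as Pz.
  pose proof (exp_pos ((N - z) * ln (N - z) - (N - z) - 1)) as Pw.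
  assert (Hden : 0 < Gamma (z + 1) * Gamma (N - z + 1)) by (apply Rmult_lt_0_compat; lra).
  unfold gamma_binom. split; [apply Rdiv_le_0_compat; lra |].
  apply Rle_trans with ((N + 1) * exp (N * ln (N + 1) - N)
                        / (exp (z * ln z - z - 1) * exp ((N - z) * ln (N - z) - (N - z) - 1))).
  - unfold Rdiv. apply Rmult_le_compat; [lra | left; apply Rinv_0_lt_compat; lra | lra |].
    apply Rinv_le_contravar; [apply Rmult_lt_0_compat; lra | apply Rmult_le_compat; lra].
  - rewrite <- (exp_ln (N + 1)) at 1 by lra.
    unfold Rdiv. rewrite <- !exp_plus, <- exp_Ropp, <- exp_plus. apply exp_le_mono.
    pose proof (mul_ln_succ_le N ltac:(lra)). lra.
Qed.

Lemma relative_entropy_lower N q z : 0 < q < 1 -> N * q <= z -> 0 < z < N ->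
  (z - N * q) ^ 2 / (2 * z) <=
  z * (ln z - ln N - ln q) + (N - z) * (ln (N - z) - ln N - ln (1 - q)).
Proof.
  intros Hq Hzq Hz.
  assert (Hup : (z - N * q) + (z - N * q) ^ 2 / (2 * z) <= z * (ln z - ln N - ln q)).
  { assert (Hratio : 1 <= z / (N * q)).
    { apply (Rmult_le_reg_r (N * q)); [nra |].
      unfold Rdiv. rewrite Rmult_assoc, Rinv_l by nra. lra. }
    pose proof (ln_ge_2nd _ Hratio) as H.
    rewrite ln_div, ln_mult in H by nra.
    assert (z * (1 - / (z / (N * q)) + (1 - / (z / (N * q))) ^ 2 / 2)
            <= z * (ln z - (ln N + ln q))) by (apply Rmult_le_compat_l; lra).
    assert (z * (1 - / (z / (N * q)) + (1 - / (z / (N * q))) ^ 2 / 2)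
            = (z - N * q) + (z - N * q) ^ 2 / (2 * z)) by (field; split; nra).
    lra. }
  assert (Hdown : (N - z) - N * (1 - q) <= (N - z) * (ln (N - z) - ln N - ln (1 - q))).
  { pose proof (ln_ge_1sub ((N - z) / (N * (1 - q))) ltac:(apply Rdiv_lt_0_compat; nra)) as H.
    rewrite ln_div, ln_mult in H by nra.
    assert ((N - z) * (1 - / ((N - z) / (N * (1 - q))))
            <= (N - z) * (ln (N - z) - (ln N + ln (1 - q)))) by (apply Rmult_le_compat_l; lra).
    assert ((N - z) * (1 - / ((N - z) / (N * (1 - q)))) = (N - z) - N * (1 - q))
      by (field; split; nra).
    lra. }
  lra.
Qed.

Lemma gamma_binom_chernoff N q z : 0 < q < 1 -> N * q <= z -> 0 < z < N ->
  0 <= gamma_binom N z * Rpower q z * Rpower (1 - q) (N - z) <=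
  exp (ln (N + 1) + 3 - (z - N * q) ^ 2 / (2 * z)).
Proof.
  intros Hq Hzq Hz.
  destruct (gamma_binom_bound N z Hz) as [B0 B1].
  pose proof (relative_entropy_lower N q z Hq Hzq Hz) as Hkl.
  unfold Rpower.
  pose proof (exp_pos (z * ln q)). pose proof (exp_pos ((N - z) * ln (1 - q))).
  split; [apply Rmult_le_pos; [apply Rmult_le_pos |]; lra |].
  apply Rle_trans with
    (exp (ln (N + 1) + 3 + N * ln N - z * ln z - (N - z) * ln (N - z))
     * exp (z * ln q) * exp ((N - z) * ln (1 - q))).
  { repeat apply Rmult_le_compat_r; lra. }
  rewrite <- !exp_plus. apply exp_le_mono.
  assert (N * ln N - z * ln z - (N - z) * ln (N - z) + z * ln q + (N - z) * ln (1 - q)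
          = - (z * (ln z - ln N - ln q) + (N - z) * (ln (N - z) - ln N - ln (1 - q))))
    by ring.
  lra.
Qed.

Lemma Rpower_le_exp_sub1 F R0 : 0 < F -> 0 <= R0 -> Rpower F R0 <= exp (R0 * (F - 1)).
Proof.
  intros HF HR. unfold Rpower. apply exp_le_mono.
  apply Rmult_le_compat_l; [lra | apply ln_le_sub1; lra].
Qed.

Lemma weight_excess_le (k : nat) (p A e : R) :
  (1 <= k)%nat -> 0 < p < 1 -> 2 <= A -> / A <= e ->
  1 <= 1 + p / (1 - p) * ((e ^ k - / A ^ k) / (1 - / A ^ k)) /\
  1 + p / (1 - p) * ((e ^ k - / A ^ k) / (1 - / A ^ k)) - 1 <=
  p / (1 - p) * (2 * INR k * e ^ (k - 1) * (e - / A)).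
Proof.
  intros Hk Hp HA He.
  assert (Hq0 : 0 < / A) by (apply Rinv_0_lt_compat; lra).
  assert (Hq2 : / A <= / 2) by (apply Rinv_le_contravar; lra).
  rewrite <- pow_inv.
  set (q := / A) in *.
  destruct k as [|k]; [lia |]. replace (S k - 1)%nat with k by lia.
  assert (Hqk : q ^ S k <= q).
  { rewrite <- (Rmult_1_r q) at 2. simpl. apply Rmult_le_compat_l; [lra |].
    rewrite <- (pow1 k). apply pow_incr. lra. }
  assert (0 < q ^ S k) by (apply pow_lt; lra).
  assert (q ^ S k <= e ^ S k) by (apply pow_incr; lra).
  assert (Hpow := pow_sub_le k e q ltac:(lra)).
  assert (Hp' : 0 < p / (1 - p)) by (apply Rdiv_lt_0_compat; lra).
  assert (Hfrac : 0 <= (e ^ S k - q ^ S k) / (1 - q ^ S k)) by (apply Rdiv_le_0_compat; lra).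
  split.
  - assert (0 <= p / (1 - p) * ((e ^ S k - q ^ S k) / (1 - q ^ S k)))
      by (apply Rmult_le_pos; lra).
    lra.
  - replace (1 + p / (1 - p) * ((e ^ S k - q ^ S k) / (1 - q ^ S k)) - 1)
      with (p / (1 - p) * ((e ^ S k - q ^ S k) / (1 - q ^ S k))) by ring.
    apply Rmult_le_compat_l; [lra |].
    (* the denominator [1 - q^(k+1)] is at least [1/2] *)
    apply Rle_trans with (2 * (e ^ S k - q ^ S k)); [| lra].
    unfold Rdiv. rewrite Rmult_comm. apply Rmult_le_compat_r; [lra |].
    rewrite <- (Rinv_inv 2). apply Rinv_le_contravar; lra.
Qed.

(* The relative excess [delta_n = d eta_1 - 1 = lambda n^(k alpha - 1) / (alpha ln n)]. *)
Definition delta1 (k : nat) (alpha lambda : R) (n : nat) : R :=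
  lambda * Rpower (INR n) (INR k * alpha - 1) / (alpha * ln (INR n)).

Lemma ln_dd alpha n : ln (dd alpha n) = alpha * ln (INR n).
Proof. apply ln_Rpower. Qed.

Section ScalingIdentities.

Variables (k : nat) (alpha lambda : R) (n : nat).
Hypothesis alpha_pos : 0 < alpha.
Hypothesis n_pos : 0 < INR n.
Hypothesis ln_n_pos : 0 < ln (INR n).

Lemma dd_eta1 : dd alpha n * eta1 k alpha lambda n = 1 + delta1 k alpha lambda n.
Proof.
  unfold eta1, delta1. rewrite ln_dd. unfold dd, Rpower. set (L := ln (INR n)) in *.
  replace ((INR k * alpha - 1) * L) with (alpha * L + - ((1 - (INR k - 1) * alpha) * L))
    by ring.
  rewrite exp_plus, exp_Ropp.
  pose proof (exp_pos (alpha * L)). pose proof (exp_pos ((1 - (INR k - 1) * alpha) * L)).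
  field. repeat split; apply Rgt_not_eq; lra.
Qed.

Lemma rate_delta1 :
  lambda ^ 2 * rate k alpha n = INR n / dd alpha n * delta1 k alpha lambda n ^ 2.
Proof.
  unfold rate, delta1. rewrite ln_dd. unfold dd, Rpower.
  set (L := ln (INR n)) in *.
  assert (HnL : INR n = exp L) by (symmetry; apply exp_ln; exact n_pos). rewrite HnL.
  replace (((2 * INR k - 1) * alpha - 1) * L)
    with (L + - (alpha * L) + ((INR k * alpha - 1) * L + (INR k * alpha - 1) * L)) by ring.
  rewrite !exp_plus, exp_Ropp.
  pose proof (exp_pos (alpha * L)).
  field. repeat split; apply Rgt_not_eq; lra.
Qed.

Lemma mm_eta1 : (1 <= k)%nat ->
  mm alpha n * (eta1 k alpha lambda n - / dd alpha n) = lambda * dd alpha n ^ (k - 1).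
Proof.
  intros Hk.
  assert (Hdd : 0 < dd alpha n) by apply exp_pos.
  rewrite <- (Rpower_pow (k - 1)) by exact Hdd. rewrite minus_INR by exact Hk.
  unfold mm, eta1. rewrite ln_dd. unfold Rpower. rewrite ln_dd.
  set (L := ln (INR n)) in *.
  assert (HnL : INR n = exp L) by (symmetry; apply exp_ln; exact n_pos). rewrite HnL.
  replace ((INR k - INR 1) * (alpha * L)) with (L + - ((1 - (INR k - 1) * alpha) * L))
    by (simpl; ring).
  rewrite exp_plus, exp_Ropp.
  pose proof (exp_pos ((1 - (INR k - 1) * alpha) * L)).
  field. repeat split; apply Rgt_not_eq; lra.
Qed.

End ScalingIdentities.

Definition n_large (alpha lambda : R) (n : nat) : Prop :=
  1 <= ln (INR n) /\ 1 + lambda <= alpha * ln (INR n).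

Lemma n_large_eventually alpha lambda : 0 < alpha -> 0 < lambda ->
  eventually (n_large alpha lambda).
Proof.
  intros Ha Hl.
  set (X := 1 + (1 + lambda) / alpha).
  assert (0 < (1 + lambda) / alpha) by (apply Rdiv_lt_0_compat; lra).
  destruct (INR_archimed 1 (exp X) ltac:(lra)) as [n0 Hn0].
  exists n0. intros n Hn. apply le_INR in Hn.
  assert (HX : X <= ln (INR n)).
  { rewrite <- (ln_exp X). apply ln_le; [apply exp_pos | lra]. }
  assert (alpha * X <= alpha * ln (INR n)) by (apply Rmult_le_compat_l; lra).
  assert (alpha * X = alpha + (1 + lambda)) by (unfold X; field; lra).
  unfold X in *. split; lra.
Qed.

(* Large [n] satisfy [n > 1] (as [ln 0 = 0] in this library) and hence [ln n > 0]. *)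
Lemma n_large_INR alpha lambda n : n_large alpha lambda n -> 1 < INR n.
Proof.
  intros [HL _]. destruct n as [|n].
  - exfalso. simpl in HL. unfold ln in HL. destruct (Rlt_dec 0 0); lra.
  - pose proof (lt_0_INR (S n) ltac:(lia)) as Hn.
    rewrite <- (exp_ln (INR (S n))) by exact Hn. rewrite <- exp_0. apply exp_increasing. lra.
Qed.

Lemma n_large_pos alpha lambda n : n_large alpha lambda n -> 0 < INR n /\ 0 < ln (INR n).
Proof. intros Hn. pose proof (n_large_INR _ _ _ Hn). destruct Hn. split; lra. Qed.

(* [d > 2], since [ln d = alpha ln n >= 1]. *)
Lemma dd_gt_2 alpha lambda n : 0 < lambda -> n_large alpha lambda n -> 2 < dd alpha n.
Proof.
  intros Hl [_ HaL].
  unfold dd, Rpower. pose proof (exp_ineq1 (alpha * ln (INR n)) ltac:(lra)). lra.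
Qed.

(* [0 < delta_n <= lambda / (alpha ln n) <= 1], since [k alpha <= 1] and [alpha ln n >= lambda]. *)
Lemma delta1_bounds k alpha lambda n : 0 < alpha -> INR k * alpha <= 1 -> 0 < lambda ->
  n_large alpha lambda n ->
  0 < delta1 k alpha lambda n <= lambda / (alpha * ln (INR n)) /\
  lambda / (alpha * ln (INR n)) <= 1.
Proof.
  intros Ha Hka Hl [HL HaL].
  assert (Hpow : 0 < Rpower (INR n) (INR k * alpha - 1) <= 1).
  { unfold Rpower. split; [apply exp_pos |].
    rewrite <- exp_0 at 2. apply exp_le_mono. nra. }
  unfold delta1, Rdiv. split; [split |].
  - apply Rmult_lt_0_compat; [nra | apply Rinv_0_lt_compat; nra].
  - apply Rmult_le_compat_r; [left; apply Rinv_0_lt_compat; nra | nra].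
  - apply (Rmult_le_reg_r (alpha * ln (INR n))); [lra |].
    rewrite Rmult_assoc, Rinv_l by lra. lra.
Qed.

(* Bound on [r m (f(eta_1) - 1)], uniform in [n]. *)
Definition Kc (k : nat) (r p lambda : R) : R :=
  2 * r * (p / (1 - p)) * INR k * lambda * 2 ^ (k - 1).

Lemma Kc_nonneg k r p lambda : 0 < r -> 0 < p < 1 -> 0 < lambda -> 0 <= Kc k r p lambda.
Proof.
  intros Hr Hp Hl. unfold Kc. assert (0 < p / (1 - p)) by (apply Rdiv_lt_0_compat; lra).
  pose proof (pos_INR k). assert (0 < 2 ^ (k - 1)) by (apply pow_lt; lra).
  apply Rmult_le_pos; [apply Rmult_le_pos; [apply Rmult_le_pos; [apply Rmult_le_pos |] |] |];
    lra.
Qed.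

Lemma log_over_rate_le (T L alpha beta c : R) : 1 <= L -> 0 < alpha -> 0 < beta ->
  0 <= T <= c * L ->
  0 <= T / (exp (beta * L) / (alpha * L) ^ 2) <= 256 * c * alpha ^ 2 / beta ^ 4 / L.
Proof.
  intros HL Ha Hb HT.
  assert (H4 : 0 < (beta * L / 4) ^ 4) by (apply pow_lt; nra).
  assert (HE := exp_ge_pow4 (beta * L) ltac:(nra)).
  assert (HaL : 0 < (alpha * L) ^ 2) by (apply pow_lt; nra).
  assert (Hc : 0 <= c) by nra.
  replace (T / (exp (beta * L) / (alpha * L) ^ 2)) with (T * (alpha * L) ^ 2 / exp (beta * L))
    by (pose proof (exp_pos (beta * L)); field; repeat split; apply Rgt_not_eq; lra).
  split; [apply Rdiv_le_0_compat; [apply Rmult_le_pos |]; lra |].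
  apply Rle_trans with (c * L * (alpha * L) ^ 2 / (beta * L / 4) ^ 4).
  - unfold Rdiv. apply Rmult_le_compat.
    + apply Rmult_le_pos; lra.
    + left; apply Rinv_0_lt_compat, exp_pos.
    + apply Rmult_le_compat_r; lra.
    + apply Rinv_le_contravar; lra.
  - right. field. split; lra.
Qed.

Lemma rate_exp k alpha n :
  rate k alpha n = exp (((2 * INR k - 1) * alpha - 1) * ln (INR n)) / (alpha * ln (INR n)) ^ 2.
Proof. unfold rate. rewrite ln_dd. reflexivity. Qed.

(* The correction [eps_n] of the theorem: chosen so that the bound of [Phi_c_eta1_bound]
   equals [exp (- (lambda^2/2 + eps_n) rate - ln n)]. *)
Definition eps_seq (k : nat) (alpha r p lambda : R) (n : nat) : R :=
  lambda ^ 2 / 2 * (1 / (1 + delta1 k alpha lambda n) - 1)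
  - (ln (INR n + 1) + 3 + Kc k r p lambda + ln (INR n)) / rate k alpha n.

(* The constant in [|eps_n| <= K_eps / ln n]. *)
Definition K_eps (k : nat) (alpha r p lambda : R) : R :=
  lambda ^ 3 / (2 * alpha)
  + 256 * (6 + Kc k r p lambda) * alpha ^ 2 / ((2 * INR k - 1) * alpha - 1) ^ 4.

Section LargeN.

Variables (k : nat) (alpha r p lambda : R) (n : nat).
Hypothesis k_pos : (1 <= k)%nat.
Hypothesis alpha_pos : 0 < alpha.
Hypothesis k_alpha_le1 : INR k * alpha <= 1.
Hypothesis r_pos : 0 < r.
Hypothesis p_range : 0 < p < 1.
Hypothesis lambda_pos : 0 < lambda.
Hypothesis n_big : n_large alpha lambda n.

(* The weight factor stays bounded: [1 <= f(eta_1)] and [r m (f(eta_1) - 1) <= Kc], using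
   [f(eta_1) - 1 <= p/(1-p) 2 k eta_1^(k-1) (eta_1 - 1/d)], [m (eta_1 - 1/d) = lambda d^(k-1)]
   and [d eta_1 = 1 + delta_n <= 2]. *)
Lemma weight_at_eta1 :
  1 <= f_fun k alpha p n (eta1 k alpha lambda n) /\
  r * mm alpha n * (f_fun k alpha p n (eta1 k alpha lambda n) - 1) <= Kc k r p lambda.
Proof.
  destruct (n_large_pos _ _ _ n_big) as [HN HL].
  pose proof (dd_gt_2 _ _ _ lambda_pos n_big) as HA.
  destruct (delta1_bounds k alpha lambda n alpha_pos k_alpha_le1 lambda_pos n_big) as [Hdel Hlam].
  pose proof (dd_eta1 k alpha lambda n alpha_pos HL) as HeA.
  pose proof (mm_eta1 k alpha lambda n alpha_pos HN HL k_pos) as Hmm.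
  set (A := dd alpha n) in *. set (e := eta1 k alpha lambda n) in *.
  set (d := delta1 k alpha lambda n) in *.
  assert (He : / A <= e).
  { apply (Rmult_le_reg_l A); [lra |]. rewrite Rinv_r by lra. lra. }
  destruct (weight_excess_le k p A e k_pos p_range ltac:(lra) He) as [HF1 HF2].
  unfold f_fun. fold A. split; [exact HF1 |].
  assert (Hmpos : 0 <= mm alpha n).
  { unfold mm. rewrite ln_dd.
    apply Rmult_le_pos; [| apply Rmult_le_pos]; lra. }
  assert (Hp' : 0 < p / (1 - p)) by (apply Rdiv_lt_0_compat; lra).
  assert (Hcoef : 0 <= 2 * r * (p / (1 - p)) * INR k * lambda).
  { pose proof (pos_INR k).
    apply Rmult_le_pos; [apply Rmult_le_pos; [apply Rmult_le_pos; [apply Rmult_le_pos |] |] |];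
      lra. }
  apply Rle_trans with (r * mm alpha n * (p / (1 - p) * (2 * INR k * e ^ (k - 1) * (e - / A)))).
  { apply Rmult_le_compat_l; [nra | exact HF2]. }
  replace (r * mm alpha n * (p / (1 - p) * (2 * INR k * e ^ (k - 1) * (e - / A))))
    with (2 * r * (p / (1 - p)) * INR k * e ^ (k - 1) * (mm alpha n * (e - / A))) by ring.
  rewrite Hmm.
  replace (2 * r * (p / (1 - p)) * INR k * e ^ (k - 1) * (lambda * A ^ (k - 1)))
    with (2 * r * (p / (1 - p)) * INR k * lambda * (A * e) ^ (k - 1))
    by (rewrite Rpow_mult_distr; ring).
  unfold Kc. apply Rmult_le_compat_l; [exact Hcoef |].
  rewrite HeA. apply pow_incr. lra.
Qed.

(* Main estimate: with [z = n eta_1], the Chernoff bound gives the exponent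
   [(z - n/d)^2 / (2 z) = (lambda^2/2) rate / (1 + delta_n)], and the weight adds at most [Kc]. *)
Lemma Phi_c_eta1_bound :
  0 <= Phi_c k alpha r p n (INR n * eta1 k alpha lambda n) <=
  exp (ln (INR n + 1) + 3 + Kc k r p lambda
       - lambda ^ 2 / 2 * rate k alpha n / (1 + delta1 k alpha lambda n)).
Proof.
  destruct (n_large_pos _ _ _ n_big) as [HN HL].
  pose proof (dd_gt_2 _ _ _ lambda_pos n_big) as HA.
  destruct (delta1_bounds k alpha lambda n alpha_pos k_alpha_le1 lambda_pos n_big) as [Hdel Hlam].
  pose proof (dd_eta1 k alpha lambda n alpha_pos HL) as HeA.
  pose proof (rate_delta1 k alpha lambda n alpha_pos HN HL) as Hrate.
  destruct weight_at_eta1 as [HF1 HW].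
  assert (HR : 0 <= r * mm alpha n).
  { unfold mm. rewrite ln_dd.
    apply Rmult_le_pos; [| apply Rmult_le_pos; [| apply Rmult_le_pos]]; lra. }
  set (N := INR n) in *. set (A := dd alpha n) in *. set (e := eta1 k alpha lambda n) in *.
  set (d := delta1 k alpha lambda n) in *.
  assert (He : e = (1 + d) / A) by (rewrite <- HeA; field; lra).
  assert (He_lo : / A <= e).
  { rewrite He. unfold Rdiv. rewrite <- (Rmult_1_l (/ A)) at 1.
    apply Rmult_le_compat_r; [left; apply Rinv_0_lt_compat |]; lra. }
  assert (He_hi : e < 1).
  { rewrite He. apply (Rmult_lt_reg_r A); [lra |]. unfold Rdiv.
    rewrite Rmult_assoc, Rinv_l by lra. lra. }
  assert (Hz : 0 < N * e < N) by (split; nra).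
  assert (Hq : 0 < / A < 1).
  { split; [apply Rinv_0_lt_compat; lra |].
    rewrite <- Rinv_1. apply Rinv_lt_contravar; lra. }
  destruct (gamma_binom_chernoff N (/ A) (N * e) Hq ltac:(nra) Hz) as [C0 C1].
  pose proof (Rpower_le_exp_sub1 (f_fun k alpha p n e) _ ltac:(lra) HR) as HFR.
  assert (Hdev : (N * e - N * / A) ^ 2 / (2 * (N * e))
                 = lambda ^ 2 / 2 * rate k alpha n / (1 + d)).
  { assert (Hr : rate k alpha n = N / A * d ^ 2 / lambda ^ 2)
      by (rewrite <- Hrate; field; lra).
    rewrite Hr, He. field. repeat split; apply Rgt_not_eq; lra. }
  unfold Phi_c. fold N A. replace (N * e / N) with e by (field; lra). fold (gamma_binom N (N * e)).
  pose proof (exp_pos (r * mm alpha n * (f_fun k alpha p n e - 1))).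
  assert (0 <= Rpower (f_fun k alpha p n e) (r * mm alpha n)) by (left; apply exp_pos).
  split; [apply Rmult_le_pos; assumption |].
  apply Rle_trans with (exp (ln (N + 1) + 3 - (N * e - N * / A) ^ 2 / (2 * (N * e)))
                        * exp (r * mm alpha n * (f_fun k alpha p n e - 1))).
  { apply Rmult_le_compat; assumption. }
  rewrite <- exp_plus, Hdev. apply exp_le_mono. lra.
Qed.

Lemma ratio_le_inv_n :
  0 <= Phi_c k alpha r p n (INR n * eta1 k alpha lambda n)
       / exp (- (lambda ^ 2 / 2 + eps_seq k alpha r p lambda n) * rate k alpha n)
  <= / INR n.
Proof.
  destruct (n_large_pos _ _ _ n_big) as [HN HL].
  destruct (delta1_bounds k alpha lambda n alpha_pos k_alpha_le1 lambda_pos n_big) as [Hdel _].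
  destruct Phi_c_eta1_bound as [P0 P1].
  assert (Hrate : 0 < rate k alpha n).
  { rewrite rate_exp. apply Rdiv_lt_0_compat; [apply exp_pos | apply pow_lt; nra]. }
  set (T := ln (INR n + 1) + 3 + Kc k r p lambda).
  set (D := lambda ^ 2 / 2 * rate k alpha n / (1 + delta1 k alpha lambda n)) in *.
  assert (Hexp : - (lambda ^ 2 / 2 + eps_seq k alpha r p lambda n) * rate k alpha n
                 = T + ln (INR n) - D).
  { unfold eps_seq, D, T. field. split; lra. }
  rewrite Hexp. pose proof (exp_pos (T + ln (INR n) - D)).
  split; [apply Rdiv_le_0_compat; lra |].
  apply Rle_trans with (exp (T - D) / exp (T + ln (INR n) - D)).
  { unfold Rdiv. apply Rmult_le_compat_r; [left; apply Rinv_0_lt_compat; lra | exact P1]. }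
  unfold Rdiv. rewrite <- exp_Ropp, <- exp_plus.
  replace (T - D + - (T + ln (INR n) - D)) with (- ln (INR n)) by ring.
  rewrite exp_Ropp, exp_ln by lra. lra.
Qed.

Hypothesis rate_exponent_pos : (2 * INR k - 1) * alpha > 1.

(* [eps_n = O(1 / ln n)]: the first term is at most [lambda^2/2 delta_n <= lambda^3/(2 alpha ln n)],
   the second is [O(ln n / rate)], and the rate grows like a power of [n]. *)
Lemma eps_seq_bound :
  Rabs (eps_seq k alpha r p lambda n) <= K_eps k alpha r p lambda / ln (INR n).
Proof.
  pose proof (n_large_INR _ _ _ n_big) as HN.
  destruct (delta1_bounds k alpha lambda n alpha_pos k_alpha_le1 lambda_pos n_big) as [Hdel _].
  destruct n_big as [HL HaL].
  pose proof (Kc_nonneg k r p lambda r_pos p_range lambda_pos) as HKc.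
  set (L := ln (INR n)) in *. set (d := delta1 k alpha lambda n) in *.
  set (beta := (2 * INR k - 1) * alpha - 1).
  set (T := ln (INR n + 1) + 3 + Kc k r p lambda + L).
  assert (HT : 0 <= T <= (6 + Kc k r p lambda) * L).
  { assert (0 <= ln (INR n + 1)) by (rewrite <- ln_1; apply ln_le; lra).
    assert (ln (INR n + 1) <= ln 2 + L) by (unfold L; rewrite <- ln_mult by lra; apply ln_le; lra).
    assert (ln 2 <= 1) by (pose proof (ln_le_sub1 2); lra).
    unfold T. split; nra. }
  destruct (log_over_rate_le T L alpha beta (6 + Kc k r p lambda) HL alpha_pos
              ltac:(unfold beta; lra) HT) as [R0 R1].
  assert (Hshift : 0 <= lambda ^ 2 / 2 * (d / (1 + d)) <= lambda ^ 3 / (2 * alpha) / L).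
  { assert (0 < lambda ^ 2 / 2) by (apply Rdiv_lt_0_compat; [apply pow_lt |]; lra).
    assert (0 <= d / (1 + d) <= d).
    { split; [apply Rdiv_le_0_compat; lra |].
      apply (Rmult_le_reg_r (1 + d)); [lra |].
      unfold Rdiv. rewrite Rmult_assoc, Rinv_l by lra. nra. }
    split; [apply Rmult_le_pos; lra |].
    apply Rle_trans with (lambda ^ 2 / 2 * (lambda / (alpha * L)));
      [apply Rmult_le_compat_l; lra |].
    right. field. split; lra. }
  unfold eps_seq. fold L d T. rewrite rate_exp. fold L beta.
  replace (lambda ^ 2 / 2 * (1 / (1 + d) - 1)) with (- (lambda ^ 2 / 2 * (d / (1 + d))))
    by (field; lra).
  replace (K_eps k alpha r p lambda / L)
    with (lambda ^ 3 / (2 * alpha) / L + 256 * (6 + Kc k r p lambda) * alpha ^ 2 / beta ^ 4 / L)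
    by (unfold K_eps; fold beta; field; split; [unfold beta |]; lra).
  apply Rabs_le. lra.
Qed.

End LargeN.

Lemma is_lim_seq_inv_INR : is_lim_seq (fun n => / INR n) 0.
Proof.
  replace (Finite 0) with (Rbar_inv p_infty) by reflexivity.
  apply is_lim_seq_inv; [exact is_lim_seq_INR | discriminate].
Qed.

Lemma is_lim_seq_inv_ln : is_lim_seq (fun n => / ln (INR n)) 0.
Proof.
  replace (Finite 0) with (Rbar_inv p_infty) by reflexivity.
  apply is_lim_seq_inv; [| discriminate].
  exact (filterlim_comp _ _ _ INR ln _ _ _ is_lim_seq_INR is_lim_ln_p).
Qed.

Lemma is_lim_seq_of_inv_ln_bound (u : nat -> R) (K : R) :
  eventually (fun n => Rabs (u n) <= K / ln (INR n)) -> is_lim_seq u 0.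
Proof.
  intros Hu.
  assert (HK : forall c, is_lim_seq (fun n => c * K / ln (INR n)) 0).
  { intros c. replace (Finite 0) with (Rbar_mult (c * K) 0) by (simpl; f_equal; ring).
    apply (is_lim_seq_scal_l _ (c * K)), is_lim_seq_inv_ln. }
  apply is_lim_seq_le_le_loc with (u := fun n => -1 * K / ln (INR n))
                                  (w := fun n => 1 * K / ln (INR n)); [| apply HK | apply HK].
  revert Hu. apply filter_imp. intros n Hn. apply Rabs_le_between in Hn.
  unfold Rdiv in *. lra.
Qed.

Theorem lemma4p6 (k : nat) (alpha r p lambda : R) :
  (2 <= k)%nat -> 0 < alpha -> 0 < r -> 0 < p < 1 ->
  (2 * INR k - 1) * alpha > 1 -> INR k * alpha <= 1 ->
  INR k >= tau p * ln (tau p) / (tau p - 1) -> r < r_cr p ->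
  0 < lambda ->
  exists eps : nat -> R,
    is_lim_seq eps 0 /\
    is_lim_seq
      (fun n => Phi_c k alpha r p n (INR n * eta1 k alpha lambda n)
                / exp (- (lambda ^ 2 / 2 + eps n) * rate k alpha n)) 0.
Proof.
  intros Hk Ha Hr Hp Hrate Hka _ _ Hl.
  assert (Hk1 : (1 <= k)%nat) by lia.
  pose proof (n_large_eventually alpha lambda Ha Hl) as Hlarge.
  exists (eps_seq k alpha r p lambda). split.
  -
    apply (is_lim_seq_of_inv_ln_bound _ (K_eps k alpha r p lambda)).
    revert Hlarge. apply filter_imp. intros n Hn.
    exact (eps_seq_bound k alpha r p lambda n Ha Hka Hr Hp Hl Hn Hrate).
  -
    apply is_lim_seq_le_le_loc with (u := fun _ => 0) (w := fun n => / INR n).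
    + revert Hlarge. apply filter_imp. intros n Hn.
      exact (ratio_le_inv_n k alpha r p lambda n Hk1 Ha Hka Hr Hp Hl Hn).
    + apply is_lim_seq_const.
    + apply is_lim_seq_inv_INR.
Qed.
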